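(* The following identities hold: \begin{align*}\sum_{k=1}^\infty\frac{5929k^2-4675k+914}{k(-2)^k\binom{4k}k}&=-189-30\log2, \\\sum_{k=1}^\infty\frac{39083k^2-31627k+5624}{k(-24)^k\binom{4k}k}&=40\log\frac23-117, \\\sum_{k=1}^\infty\frac{475397k^2-335665k+55072}{k(-192)^k\binom{4k}k}&=160\log\frac34-207. \end{align*} *)

From Stdlib Require Import Reals.
From Coquelicot Require Import Coquelicot.
Open Scope R_scope.

Definition binom4 (k : nat) : R := Binomial.C (4 * k) k.

Definition sterm (a b c m : R) (k : nat) : R :=
  (a * (INR k)^2 + b * INR k + c) / (INR k * m ^ k * binom4 k).

From Stdlib Require Import Reals Factorial Lra Lia.
From Coquelicot Require Import Coquelicot.
Open Scope R_scope.

(* The Beta integral gives 1 / (k binom(4k,k)) = int_0^1 x^(k-1) (1-x)^(3k) dx, so with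
   t = x (1-x)^3 / m each series is the integral over [0,1] of (1-x)^3/m times
   sum_(n >= 0) P(n+1) t^n, a rational function of t with denominator (1-t)^3.  For
   m <= -2 we have -1/8 <= t <= 0, so the tail after N terms is O(N^2 8^-N) uniformly
   on [0,1] and summation and integration commute.  The three resulting rational
   integrals are evaluated through explicit elementary antiderivatives. *)

Lemma is_RInt_derive_R (f df : R -> R) (a b : R) :
  (forall x, Rmin a b <= x <= Rmax a b -> is_derive f x (df x)) ->
  (forall x, Rmin a b <= x <= Rmax a b -> continuous df x) ->
  is_RInt df a b (f b - f a).
Proof. exact (is_RInt_derive f df a b). Qed.

Lemma is_RInt_beta (p q : nat) :
  is_RInt (fun x => x ^ p * (1 - x) ^ q) 0 1
    (INR (fact p) * INR (fact q) / INR (fact (p + q + 1))).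
Proof.
assert (Hp : forall n, INR n + 1 <> 0) by (intros n; pose proof (pos_INR n); lra).
(* auto_derive unfolds INR (S n) into this match. *)
assert (HS : forall n, match n with 0%nat => 1 | S _ => INR n + 1 end = INR n + 1)
  by exact S_INR.
assert (Hf : forall n, INR (fact n) <> 0) by (intros n; apply not_0_INR, fact_neq_0).
revert p; induction q as [|q IH]; intros p.
- replace (p + 0 + 1)%nat with (S p) by lia.
  set (F x := x ^ S p / (INR p + 1)).
  replace (INR (fact p) * INR (fact 0) / INR (fact (S p))) with (F 1 - F 0).
  + apply is_RInt_derive_R; intros x _.
    * unfold F. auto_derive; [easy|]. rewrite HS. field. apply Hp.
    * apply (ex_derive_continuous (V := R_NormedModule)). auto_derive. easy.
  + unfold F. rewrite pow1, pow_i, fact_simpl, mult_INR, S_INR by lia. simpl (INR (fact 0)).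
    field. split; auto.
- set (c := (INR q + 1) / (INR p + 1)).
  set (F x := x ^ S p * (1 - x) ^ S q / (INR p + 1)).
  assert (Hparts : is_RInt (fun x => x ^ p * (1 - x) ^ S q - c * (x ^ S p * (1 - x) ^ q)) 0 1
                     (F 1 - F 0)).
  { apply is_RInt_derive_R; intros x _.
    - (* auto_derive writes 1 - x as 1 + - x, a different atom for field under ^ q. *)
      unfold F, c. auto_derive; [easy|]. rewrite !HS. fold (1 - x). simpl pow. field. apply Hp.
    - apply (ex_derive_continuous (V := R_NormedModule)). auto_derive. easy. }
  assert (Hrest : is_RInt (fun x => c * (x ^ S p * (1 - x) ^ q)) 0 1
     (c * (INR (fact (S p)) * INR (fact q) / INR (fact (S p + q + 1)))))
    by exact (is_RInt_scal _ _ _ c _ (IH (S p))).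
  eapply is_RInt_ext; [| replace (INR (fact p) * INR (fact (S q)) / INR (fact (p + S q + 1)))
     with ((F 1 - F 0) + c * (INR (fact (S p)) * INR (fact q) / INR (fact (S p + q + 1))));
     [exact (is_RInt_plus _ _ _ _ _ _ Hparts Hrest)|]].
  + intros x _. cbn -[pow]. ring.
  + unfold F, c. replace (S p + q + 1)%nat with (p + S q + 1)%nat by lia.
    rewrite !fact_simpl, !mult_INR, !S_INR. simpl pow.
    field. split; auto.
Qed.

Lemma is_RInt_sum_n (f : nat -> R -> R) (I : nat -> R) (a b : R) (N : nat) :
  (forall n, is_RInt (f n) a b (I n)) ->
  is_RInt (fun x => sum_n (fun n => f n x) N) a b (sum_n I N).
Proof.
intros Hf. induction N as [|N IH].
- rewrite sum_O. apply (is_RInt_ext (f 0%nat)); [intros x _; rewrite sum_O; easy | apply Hf].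
- rewrite sum_Sn.
  apply (is_RInt_ext (fun x => plus (sum_n (fun n => f n x) N) (f (S N) x)));
    [intros x _; rewrite sum_Sn; easy | apply (is_RInt_plus _ _ _ _ _ _ IH (Hf (S N)))].
Qed.

Lemma is_lim_seq_geom_bound (u : nat -> R) (l K r : R) :
  0 <= r < 1 -> (forall n, Rabs (l - u n) <= K * r ^ n) -> is_lim_seq u l.
Proof.
intros Hr Hu.
assert (Hd : is_lim_seq (fun n => l - u n) 0).
{ apply is_lim_seq_abs_0, (is_lim_seq_le_le (fun _ => 0) _ (fun n => K * r ^ n)).
  - intros n. split; [apply Rabs_pos | apply Hu].
  - apply is_lim_seq_const.
  - replace (Finite 0) with (Rbar_mult K 0) by (simpl; f_equal; ring).
    apply is_lim_seq_scal_l, is_lim_seq_geom. rewrite Rabs_right; lra. }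
apply (is_lim_seq_ext (fun n => l - (l - u n))); [intros n; ring|].
replace (Finite l) with (Rbar_minus l 0) by (simpl; f_equal; ring).
apply (is_lim_seq_minus _ _ l 0 _ (is_lim_seq_const l) Hd). easy.
Qed.

Lemma Rabs_mult_le (u v U V : R) : Rabs u <= U -> Rabs v <= V -> Rabs (u * v) <= U * V.
Proof.
intros Hu Hv. rewrite Rabs_mult. apply Rmult_le_compat; auto using Rabs_pos.
Qed.

Lemma sqr_succ_le_pow4 (k : nat) : (INR k + 1) ^ 2 <= 4 ^ k.
Proof.
induction k as [|k IH]; [simpl; lra|].
rewrite S_INR. simpl pow in *. pose proof (pos_INR k). nra.
Qed.

Lemma sum_n_telescope (f : nat -> R) (N : nat) :
  sum_n (fun n => f n - f (S n)) N = f 0%nat - f (S N) :> R.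
Proof.
induction N as [|N IH].
- apply sum_O.
- rewrite sum_Sn, IH. change (plus ?u ?v) with (u + v). ring.
Qed.

Ltac nonzero :=
  repeat split; try lra; repeat apply Rmult_integral_contrapositive_currified; lra.

Section QuadraticSeries.

Variables a b c m : R.

Definition quad (k : nat) : R := a * INR k ^ 2 + b * INR k + c.

Definition tau (x : R) : R := x * (1 - x) ^ 3 / m.

Definition summand_integrand (n : nat) (x : R) : R :=
  quad (S n) / m ^ S n * (x ^ n * (1 - x) ^ (3 * S n)).

Definition tail_num (k : nat) (t : R) : R :=
  a * t * (1 + t) + (2 * a * (INR k + 1) + b) * t * (1 - t)
  + (a * (INR k + 1) ^ 2 + b * (INR k + 1) + c) * (1 - t) ^ 2.

(* Closed form of sum_(n >= k) summand_integrand n x, see tail_num_step. *)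
Definition tail_integrand (k : nat) (x : R) : R :=
  (1 - x) ^ 3 / m * tau x ^ k * tail_num k (tau x) / (1 - tau x) ^ 3.

Definition integrand : R -> R := tail_integrand 0.

Lemma tail_num_step (k : nat) (t : R) :
  tail_num k t = (1 - t) ^ 3 * quad (S k) + t * tail_num (S k) t.
Proof. unfold tail_num, quad. rewrite !S_INR. ring. Qed.

Hypothesis m_le : m <= -2.

Lemma is_RInt_summand_integrand (n : nat) :
  is_RInt (summand_integrand n) 0 1 (sterm a b c m (S n)).
Proof.
replace (sterm a b c m (S n)) with
  (quad (S n) / m ^ S n * (INR (fact n) * INR (fact (3 * S n)) / INR (fact (n + 3 * S n + 1)))).
- exact (is_RInt_scal _ _ _ _ _ (is_RInt_beta n (3 * S n))).
- unfold sterm, binom4, Binomial.C, quad.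
  replace (4 * S n - S n)%nat with (3 * S n)%nat by lia.
  replace (n + 3 * S n + 1)%nat with (4 * S n)%nat by lia.
  rewrite fact_simpl, mult_INR.
  assert (m ^ S n <> 0) by (apply pow_nonzero; lra).
  pose proof (INR_fact_lt_0 n). pose proof (INR_fact_lt_0 (3 * S n)).
  pose proof (INR_fact_lt_0 (4 * S n)). pose proof (pos_INR n).
  rewrite S_INR. field. lra.
Qed.

Lemma summand_integrand_tau (n : nat) (x : R) :
  summand_integrand n x = (1 - x) ^ 3 / m * tau x ^ n * quad (S n).
Proof.
unfold summand_integrand, tau. rewrite pow_mult.
unfold Rdiv. rewrite !Rpow_mult_distr, pow_inv. simpl pow.
assert (m ^ n <> 0) by (apply pow_nonzero; lra).
field. lra.
Qed.

Lemma summand_integrand_telescope (n : nat) (x : R) : 1 - tau x <> 0 ->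
  summand_integrand n x = tail_integrand n x - tail_integrand (S n) x.
Proof.
intros Ht. rewrite summand_integrand_tau. unfold tail_integrand.
rewrite tail_num_step. simpl pow. field. split; [lra | exact Ht].
Qed.

Lemma integrand_sub_partial_sum (N : nat) (x : R) : 1 - tau x <> 0 ->
  integrand x - sum_n (fun n => summand_integrand n x) N = tail_integrand (S N) x.
Proof.
intros Ht. rewrite (sum_n_ext _ (fun n => tail_integrand n x - tail_integrand (S n) x))
  by (intros n; apply summand_integrand_telescope, Ht).
rewrite sum_n_telescope. unfold integrand. ring.
Qed.

Lemma tau_bounds (x : R) : 0 <= x <= 1 -> -1/8 <= tau x <= 0.
Proof.
intros Hx. unfold tau.
assert (Hs0 : 0 <= x * (1 - x) ^ 3) by (apply Rmult_le_pos; [lra | apply pow_le; lra]).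
assert (Hs1 : x * (1 - x) ^ 3 <= 1/4) by (simpl; nra).
assert (Hm : -1/2 <= / m < 0).
{ split; [| apply Rinv_lt_0_compat; lra].
  replace (/ m) with (- / (- m)) by (field; lra).
  assert (/ (- m) <= / 2) by (apply Rinv_le_contravar; lra). lra. }
unfold Rdiv. split; nra.
Qed.

Definition tail_bound : R := 8 * (Rabs a + Rabs b + Rabs c).

Lemma tail_bound_ge0 : 0 <= tail_bound.
Proof.
unfold tail_bound. pose proof (Rabs_pos a). pose proof (Rabs_pos b). pose proof (Rabs_pos c). lra.
Qed.

Lemma Rabs_tail_num_le (k : nat) (t : R) : -1/8 <= t <= 0 ->
  Rabs (tail_num k t) <= tail_bound * (INR k + 1) ^ 2.
Proof.
intros Ht. unfold tail_num, tail_bound. set (M := INR k + 1).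
assert (HM : 1 <= M) by (unfold M; pose proof (pos_INR k); lra).
assert (Hu : Rabs (t * (1 + t)) <= 1) by (apply Rabs_le; nra).
assert (Hv : Rabs (t * (1 - t)) <= 1) by (apply Rabs_le; nra).
assert (Hw : Rabs ((1 - t) ^ 2) <= 2) by (apply Rabs_le; simpl; nra).
assert (Hlin : Rabs (2 * a * M + b) <= 2 * Rabs a * M + Rabs b).
{ eapply Rle_trans; [apply Rabs_triang|].
  rewrite !Rabs_mult, (Rabs_right 2), (Rabs_right M) by lra. lra. }
assert (Hquad : Rabs (a * M ^ 2 + b * M + c) <= Rabs a * M ^ 2 + Rabs b * M + Rabs c).
{ eapply Rle_trans; [apply Rabs_triang|].
  eapply Rle_trans; [apply Rplus_le_compat_r, Rabs_triang|].
  rewrite !Rabs_mult, (Rabs_right M), (Rabs_right (M ^ 2)) by (try apply Rle_ge, pow_le; lra).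
  lra. }
replace (a * t * (1 + t) + (2 * a * M + b) * t * (1 - t) + (a * M ^ 2 + b * M + c) * (1 - t) ^ 2)
  with (a * (t * (1 + t)) + (2 * a * M + b) * (t * (1 - t)) + (a * M ^ 2 + b * M + c) * (1 - t) ^ 2)
  by ring.
eapply Rle_trans; [apply Rabs_triang|].
eapply Rle_trans; [apply Rplus_le_compat_r, Rabs_triang|].
pose proof (Rabs_mult_le _ _ _ _ (Rle_refl (Rabs a)) Hu).
pose proof (Rabs_mult_le _ _ _ _ Hlin Hv).
pose proof (Rabs_mult_le _ _ _ _ Hquad Hw).
pose proof (Rabs_pos a). pose proof (Rabs_pos b). pose proof (Rabs_pos c).
assert (M <= M ^ 2) by (simpl; nra).
assert (Rabs a * M <= Rabs a * M ^ 2) by (apply Rmult_le_compat_l; lra).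
assert (Rabs b * M <= Rabs b * M ^ 2) by (apply Rmult_le_compat_l; lra).
assert (Rabs a <= Rabs a * M ^ 2) by (simpl; nra).
assert (Rabs b <= Rabs b * M ^ 2) by (simpl; nra).
assert (Rabs c <= Rabs c * M ^ 2) by (simpl; nra).
nra.
Qed.

Lemma Rabs_tail_integrand_le (k : nat) (x : R) : 0 <= x <= 1 ->
  Rabs (tail_integrand k x) <= tail_bound * (/ 2) ^ k.
Proof.
intros Hx. assert (Ht := tau_bounds x Hx). unfold tail_integrand.
set (t := tau x) in *.
assert (Hfac : Rabs ((1 - x) ^ 3 / m) <= 1).
{ rewrite Rabs_div, (Rabs_right ((1 - x) ^ 3)), Rabs_left by (try apply Rle_ge, pow_le; lra).
  apply Rle_div_l; [lra|]. simpl. nra. }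
assert (Hpow : Rabs (t ^ k) <= (/ 8) ^ k).
{ rewrite <- RPow_abs. apply pow_incr. split; [apply Rabs_pos | apply Rabs_le; lra]. }
assert (Hnum : Rabs (tail_num k t) <= tail_bound * 4 ^ k).
{ eapply Rle_trans; [apply Rabs_tail_num_le; lra|].
  apply Rmult_le_compat_l; [apply tail_bound_ge0 | apply sqr_succ_le_pow4]. }
assert (Hden : Rabs (/ (1 - t) ^ 3) <= 1).
{ assert (1 <= (1 - t) ^ 3) by (simpl; nra).
  rewrite Rabs_right by (apply Rle_ge, Rlt_le, Rinv_0_lt_compat; lra).
  rewrite <- Rinv_1. apply Rinv_le_contravar; lra. }
unfold Rdiv at 2.
eapply Rle_trans.
{ apply (Rabs_mult_le _ _ _ _ (Rabs_mult_le _ _ _ _ (Rabs_mult_le _ _ _ _ Hfac Hpow) Hnum) Hden). }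
replace (/ 2) with (/ 8 * 4) by field. rewrite Rpow_mult_distr. lra.
Qed.

Lemma is_series_of_RInt_integrand (V : R) :
  is_RInt integrand 0 1 V -> is_series (fun n => sterm a b c m (S n)) V.
Proof.
intros HV. apply (is_lim_seq_geom_bound _ V tail_bound (/ 2)); [lra|]. intros N.
assert (Hrem : is_RInt (tail_integrand (S N)) 0 1 (V - sum_n (fun n => sterm a b c m (S n)) N)).
{ apply (is_RInt_ext (fun x => integrand x - sum_n (fun n => summand_integrand n x) N)).
  - intros x Hx. rewrite Rmin_left, Rmax_right in Hx by lra.
    apply integrand_sub_partial_sum. pose proof (tau_bounds x ltac:(lra)). lra.
  - exact (is_RInt_minus _ _ _ _ _ _ HV (is_RInt_sum_n _ _ _ _ N is_RInt_summand_integrand)). }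
eapply Rle_trans.
- exact (norm_RInt_le_const (tail_integrand (S N)) 0 1 _ (tail_bound * (/ 2) ^ S N) ltac:(lra)
           (fun x Hx => Rabs_tail_integrand_le (S N) x Hx) Hrem).
- simpl. pose proof (pow_le (/ 2) N ltac:(lra)). pose proof tail_bound_ge0. nra.
Qed.

Lemma integrand_continuous (x : R) : 0 <= x <= 1 -> continuous integrand x.
Proof.
intros Hx. assert (Ht := tau_bounds x Hx).
apply (ex_derive_continuous (V := R_NormedModule)).
unfold integrand, tail_integrand, tail_num, tau in *. auto_derive. nonzero.
Qed.

Lemma is_series_of_antiderivative (F : R -> R) :
  (forall x, 0 <= x <= 1 -> is_derive F x (integrand x)) ->
  is_series (fun n => sterm a b c m (S n)) (F 1 - F 0).
Proof.
intros HF. apply is_series_of_RInt_integrand, is_RInt_derive_R; intros x Hx;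
  rewrite Rmin_left, Rmax_right in Hx by lra.
- exact (HF x Hx).
- exact (integrand_continuous x Hx).
Qed.

End QuadraticSeries.

Definition denom_poly (m x : R) : R := m - x * (1 - x) ^ 3.

Lemma denom_poly_0 (m : R) : denom_poly m 0 = m.
Proof. unfold denom_poly. ring. Qed.

Lemma denom_poly_1 (m : R) : denom_poly m 1 = m.
Proof. unfold denom_poly. ring. Qed.

Lemma denom_poly_neg (m x : R) : m <= -2 -> 0 <= x <= 1 -> denom_poly m x < 0.
Proof.
intros Hm Hx. unfold denom_poly.
assert (0 <= x * (1 - x) ^ 3) by (apply Rmult_le_pos; [lra | apply pow_le; lra]). lra.
Qed.

(* Antiderivatives of the three integrands, found by Hermite reduction; the extra
   logarithm comes from the linear factor x - 2, x - 3, x + 3 of denom_poly m. *)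
Definition antideriv_m2 (x : R) : R :=
  (-4108 + x*(-7912 + x*(20118 + x*(-22512 + x*(14716 + x*(-8112 + x*(3594 + x*(-648))))))))
    / denom_poly (-2) x ^ 2
  + 30 * ln (2 - x) - 236 * ln (- denom_poly (-2) x).

Definition antideriv_m24 (x : R) : R :=
  (-4503744 + x*(-647568 + x*(1514280 + x*(-1384992 + x*(483504 + x*(-51312
    + x*(22824 + x*(-4128))))))))
    / denom_poly (-24) x ^ 2
  + 40 * ln (3 - x) - 1416 * ln (- denom_poly (-24) x).

Definition antideriv_m192 (x : R) : R :=
  (-3087765504 + x*(-64964736 + x*(144571584 + x*(-126418176 + x*(39493248 + x*(-494976
    + x*(222912 + x*(-40704))))))))
    / denom_poly (-192) x ^ 2
  - 160 * ln (x + 3) - 13728 * ln (- denom_poly (-192) x).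

Ltac check_antiderivative m :=
  let x := fresh "x" in let Hx := fresh "Hx" in
  intros x Hx; pose proof (denom_poly_neg m x ltac:(lra) Hx);
  unfold denom_poly in *; auto_derive;
  [nonzero | unfold integrand, tail_integrand, tail_num, tau; rewrite INR_0; field; nonzero].

Lemma is_series_m2 :
  is_series (fun n => sterm 5929 (-4675) 914 (-2) (S n)) (-189 - 30 * ln 2).
Proof.
replace (-189 - 30 * ln 2) with (antideriv_m2 1 - antideriv_m2 0).
- apply is_series_of_antiderivative; [lra|]. unfold antideriv_m2. check_antiderivative (-2).
- unfold antideriv_m2. rewrite denom_poly_0, denom_poly_1.
  replace (2 - 1) with 1 by ring. replace (2 - 0) with 2 by ring. rewrite ln_1. field.
Qed.

Lemma is_series_m24 :
  is_series (fun n => sterm 39083 (-31627) 5624 (-24) (S n)) (40 * ln (2 / 3) - 117).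
Proof.
replace (40 * ln (2 / 3) - 117) with (antideriv_m24 1 - antideriv_m24 0).
- apply is_series_of_antiderivative; [lra|]. unfold antideriv_m24. check_antiderivative (-24).
- unfold antideriv_m24. rewrite denom_poly_0, denom_poly_1, ln_div by lra.
  replace (3 - 1) with 2 by ring. replace (3 - 0) with 3 by ring. field.
Qed.

Lemma is_series_m192 :
  is_series (fun n => sterm 475397 (-335665) 55072 (-192) (S n)) (160 * ln (3 / 4) - 207).
Proof.
replace (160 * ln (3 / 4) - 207) with (antideriv_m192 1 - antideriv_m192 0).
- apply is_series_of_antiderivative; [lra|]. unfold antideriv_m192. check_antiderivative (-192).
- unfold antideriv_m192. rewrite denom_poly_0, denom_poly_1, ln_div by lra.
  replace (1 + 3) with 4 by ring. replace (0 + 3) with 3 by ring. field.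
Qed.

Theorem lemma3p4 :
  is_series (fun n : nat => sterm 5929 (-4675) 914 (-2) (S n))
    (-189 - 30 * ln 2)
  /\ is_series (fun n : nat => sterm 39083 (-31627) 5624 (-24) (S n))
    (40 * ln (2 / 3) - 117)
  /\ is_series (fun n : nat => sterm 475397 (-335665) 55072 (-192) (S n))
    (160 * ln (3 / 4) - 207).
Proof.
exact (conj is_series_m2 (conj is_series_m24 is_series_m192)).
Qed.
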